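(* Let $p\ge1$, $n\ge1$, $i\in\{1,\dots,p\}$, and let $C_n^i$ be the cycle of the Schreier graph $\Gamma^p_n$ with vertex set $\{0,i\}^n$ and the edges labelled $e_i$ between them. Let $\phi_n^i$ be the nontrivial automorphism (reflection) of the cycle $C_n^i$ fixing $0^n$. Then for every vertex $v$ of $C_n^i$, the decorations attached at $v$ and at $\phi_n^i(v)$ are isomorphic graphs. Moreover, the vertices $v'$ of $C_n^i$ with $d(0^n,v')=d(0^n,v)$ are exactly $v$ and $\phi_n^i(v)$.
   Context: $X=\{0,1,\dots,p\}$; the star automaton group $\mathcal G_{S_p}$ is generated by the transformations $e_1,\dots,e_p$ of $X^\ast$ defined recursively by $e_i(0w)=i\,e_i(w)$, $e_i(iw)=0w$, $e_i(jw)=jw$ for $j\notin\{0,i\}$. $\Gamma^p_n$ has vertex set $X^n$ and, for each $v$ and each $j$, an edge labelled $e_j$ joining $v$ and $e_j(v)$ (loops allowed). $C_n^i$ is the $e_i$-orbit of $0^n$, a cycle of length $2^n$. For a vertex $v$ of $C_n^i$, the decoration attached at $v$ is the connected component containing $v$ of the graph obtained from $\Gamma^p_n$ by deleting the edges of $C_n^i$. $d$ denotes the graph distance in $\Gamma^p_n$. *)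

From mathcomp Require Import all_boot.
Set Implicit Arguments. Unset Strict Implicit. Unset Printing Implicit Defensive.

(* Alphabet X = {0,...,p} is 'I_p.+1; the generators e_1..e_p are indexed by
   j : 'I_p, generator e_j acting with the letter [gen j] = j+1. *)
Definition gen (p : nat) (j : 'I_p) : 'I_p.+1 := lift ord0 j.

Fixpoint act (p : nat) (a : 'I_p.+1) (w : seq 'I_p.+1) : seq 'I_p.+1 :=
  match w with
  | [::] => [::]
  | b :: w' => if b == ord0 then a :: act a w'
               else if b == a then ord0 :: w' else b :: w'
  end.

Lemma size_act (p : nat) (a : 'I_p.+1) w : size (act a w) = size w.
Proof. by elim: w => [|b w IH] //=; case: ifP => _ /=; [rewrite IH|case: ifP]. Qed.

Lemma size_act_tuple (p n : nat) (a : 'I_p.+1) (v : n.-tuple 'I_p.+1) :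
  size (act a v) == n.
Proof. by rewrite size_act size_tuple. Qed.

Definition vert (p n : nat) := (n.-tuple 'I_p.+1)%type.

Definition eact (p n : nat) (j : 'I_p) (v : vert p n) : vert p n :=
  Tuple (size_act_tuple (gen j) v).

Definition zero (p n : nat) : vert p n := nseq_tuple n ord0.

(* Edges of Gamma^p_n: one edge (v, j) for each vertex v and label j,
   joining v and e_j(v) (loops and multiple edges allowed). *)
Definition edge (p n : nat) := (vert p n * 'I_p)%type.
Definition src (p n : nat) (e : edge p n) : vert p n := e.1.
Definition tgt (p n : nat) (e : edge p n) : vert p n := eact e.2 e.1.

Definition adj (p n : nat) : rel (vert p n) :=
  fun x y => [exists j : 'I_p, (eact j x == y) || (eact j y == x)].

(* graph distance in Gamma^p_n: least k such that a walk of length k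
   joins x to y (the graph is finite, so k < #|vertices| if reachable;
   unreachable pairs would get #|vertices|, which does not occur since
   Gamma^p_n is connected). *)
Definition dist (p n : nat) (x y : vert p n) : nat :=
  find (fun k => [exists s : k.-tuple (vert p n),
                     path (@adj p n) x s && (last x s == y)])
       (iota 0 #|{: vert p n}|).

Definition inC (p n : nat) (i : 'I_p) (v : vert p n) : bool :=
  fconnect (eact i) (zero p n) v.

Definition isCedge (p n : nat) (i : 'I_p) (e : edge p n) : bool :=
  (e.2 == i) && inC i e.1.

Definition adjD (p n : nat) (i : 'I_p) : rel (vert p n) :=
  fun x y => [exists j : 'I_p,
    (~~ isCedge i (x, j) && (eact j x == y)) ||
    (~~ isCedge i (y, j) && (eact j y == x))].

Definition decV (p n : nat) (i : 'I_p) (v : vert p n) : {set vert p n} :=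
  [set x | connect (adjD i) v x].
Definition decE (p n : nat) (i : 'I_p) (v : vert p n) : {set edge p n} :=
  [set e | ~~ isCedge i e & src e \in decV i v].

Definition mult (p n : nat) (F : {set edge p n}) (x y : vert p n) : nat :=
  #|[set e in F | ((src e == x) && (tgt e == y)) ||
                  ((src e == y) && (tgt e == x))]|.

(* (undirected, unlabelled) multigraph isomorphism between (A, F) and (B, G),
   where all edges of F (resp. G) have their endpoints in A (resp. B) *)
Definition graph_iso (p n : nat) (A B : {set vert p n})
    (F G : {set edge p n}) : Prop :=
  exists f : vert p n -> vert p n,
    [/\ {in A &, injective f}, f @: A = B &
        {in A &, forall x y, mult F x y = mult G (f x) (f y)}].

(* the reflection phi_n^i of the cycle C_n^i fixing 0^n:
   e_i^k(0^n) |-> e_i^{-k}(0^n) *)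
Definition phi (p n : nat) (i : 'I_p) (v : vert p n) : vert p n :=
  let N := order (eact i) (zero p n) in
  iter ((N - findex (eact i) (zero p n) v) %% N) (eact i) (zero p n).

(* A vertex of C_n^i is a word over {0, a}, where a = i+1 is the letter moved by
   e_i, and e_i acts on these words as a binary odometer.  Exchanging the letters 0
   and a conjugates e_a into its inverse, so phi is w |-> sigma (e_a w) with sigma
   that exchange.  Write v = 0^k s with s empty or starting with a; then
   phi v = 0^k s' with s' of the same shape.  An edge outside C_n^i never changes
   the last n - k letters of a word ending with such a suffix, and replacing s by
   s' commutes with all these edges: this maps the decoration at v onto the
   decoration at phi v.
   Zeroing every letter up to the last one outside {0, a} retracts Gamma^p_n onto
   C_n^i, sending each edge to an edge or a vertex.  Hence d(0^n, e_i^m(0^n)) is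
   the distance min(m, N - m) along the cycle of length N, a value taken exactly
   at v and at phi v. *)

From mathcomp Require Import all_boot zify.
Set Implicit Arguments. Unset Strict Implicit. Unset Printing Implicit Defensive.

(** * Words *)

Section Words.

Variables (p : nat) (a : 'I_p.+1).
Hypothesis a_neq0 : a != ord0.
Implicit Types (c x : 'I_p.+1) (s w : seq 'I_p.+1).

Definition cyc_letter x : bool := (x == ord0) || (x == a).

Arguments cyc_letter : simpl never.

Lemma cyc0 : cyc_letter ord0. Proof. by rewrite /cyc_letter eqxx. Qed.
Lemma cyca : cyc_letter a. Proof. by rewrite /cyc_letter eqxx orbT. Qed.

(* [head a s == a] says that [s] is empty or starts with [a]. *)
Definition stable_suffix s : bool := all cyc_letter s && (head a s == a).

Definition swap x : 'I_p.+1 := if x == ord0 then a else if x == a then ord0 else x.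

Fixpoint retract w : seq 'I_p.+1 :=
  if w is x :: w' then
    if all cyc_letter (x :: w') then x :: w' else ord0 :: retract w'
  else [::].

Fixpoint act_inv c w : seq 'I_p.+1 :=
  if w is x :: w' then
    if x == c then ord0 :: act_inv c w'
    else if x == ord0 then c :: w' else x :: w'
  else [::].

Lemma actK c : c != ord0 -> cancel (act c) (act_inv c).
Proof.
move=> c0; elim=> [|x w IH] //=.
case: (x =P ord0) => [->|x0] /=; first by rewrite eqxx IH.
case: (x =P c) => [->|xc] /=; first by rewrite eq_sym (negbTE c0).
by case: (x =P c) => // _; case: (x =P ord0).
Qed.

Lemma act_inj c : c != ord0 -> injective (act c).
Proof. by move/actK/can_inj. Qed.

Lemma act_cons0 c w : act c (ord0 :: w) = c :: act c w.
Proof. by []. Qed.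

Lemma act_cons_self c w : c != ord0 -> act c (c :: w) = ord0 :: w.
Proof. by move=> c0; rewrite /= (negbTE c0) eqxx. Qed.

Lemma act_cons_fix c x w : x != ord0 -> x != c -> act c (x :: w) = x :: w.
Proof. by move=> x0 xc; rewrite /= (negbTE x0) (negbTE xc). Qed.

Lemma take_act c k w : take k (act c w) = act c (take k w).
Proof.
elim: w k => [|x w IH] [|k] //=; first by case: ifP => //; case: ifP.
by case: ifP => _ /=; [rewrite IH | case: ifP].
Qed.

Lemma act_nseq_cat c k s : act c (nseq k ord0 ++ s) = nseq k c ++ act c s.
Proof. by elim: k => //= k ->. Qed.

Lemma all_cyc_act w : all cyc_letter (act a w) = all cyc_letter w.
Proof.
elim: w => //= x w IH; case: eqP => [->|_] /=; first by rewrite cyca IH.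
by case: eqP => [->|_] //=; rewrite ?cyc0 ?cyca.
Qed.

Lemma swap0 : swap ord0 = a. Proof. by rewrite /swap eqxx. Qed.
Lemma swapa : swap a = ord0. Proof. by rewrite /swap (negbTE a_neq0) eqxx. Qed.

Lemma cyc_swap x : cyc_letter (swap x) = cyc_letter x.
Proof.
rewrite /swap; case: eqP => [->|_]; first by rewrite cyca cyc0.
by case: eqP => [->|_]; rewrite ?cyca ?cyc0.
Qed.

Lemma act_swap_act w : all cyc_letter w -> act a (map swap (act a w)) = map swap w.
Proof.
elim: w => // x w IH /andP[/orP[] /eqP-> /IH {}IH].
  by rewrite act_cons0 !map_cons swapa act_cons0 IH swap0.
by rewrite act_cons_self // !map_cons swap0 act_cons_self // swapa.
Qed.

Lemma act_fix c s : c != a -> stable_suffix s -> act c s = s.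
Proof.
move=> ca; case: s => [|x s] //= /andP[_] /= /eqP->.
by rewrite (negbTE a_neq0) eq_sym (negbTE ca).
Qed.

Lemma drop_act c k w : stable_suffix (drop k w) ->
  ~~ ((c == a) && all cyc_letter (take k w)) -> drop k (act c w) = drop k w.
Proof.
elim: k w => [|k IH] w; first by rewrite !drop0 take0 andbT => sw /act_fix/(_ sw)->.
case: w => [|x w] //=; case: (x =P ord0) => [-> sw|_] /=; last by case: ifP.
by rewrite ?cyc0; exact: IH.
Qed.

Lemma stable_swap_act s : stable_suffix s -> stable_suffix (map swap (act a s)).
Proof.
case: s => [|x s] //; rewrite /stable_suffix /= => /andP[/andP[_ cs] /eqP->].
by rewrite (negbTE a_neq0) eqxx /= swap0 all_map (eq_all cyc_swap) cs cyca eqxx.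
Qed.

Lemma iter_act_cons2 x w t : cyc_letter x ->
  iter t.*2 (act a) (x :: w) = x :: iter t (act a) w.
Proof.
move=> /orP[] /eqP->; elim: t => //= t ->;
  by rewrite ?act_cons0 (act_cons_self _ a_neq0) ?act_cons0.
Qed.

Lemma iter_act_period w : all cyc_letter w -> iter (2 ^ size w) (act a) w = w.
Proof.
elim: w => //= x w IH /andP[cx /IH cw].
by rewrite expnS mul2n iter_act_cons2 // cw.
Qed.

Lemma act_reach w : all cyc_letter w ->
  exists t, iter t (act a) (nseq (size w) ord0) = w.
Proof.
elim: w => [|x w IH]; first by exists 0.
case/andP=> /orP[] /eqP-> /[dup] cw /IH[t Ht].
  by exists t.*2; rewrite iter_act_cons2 ?Ht.
(* a :: w = e_a (0 :: e_a^-1 w), and e_a^-1 = e_a^(2^|w| - 1) on {0, a}-words. *)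
exists ((2 ^ size w + t).-1.*2.+1).
rewrite iterS iter_act_cons2 ?cyc0 // act_cons0 -iterS prednK ?addn_gt0 ?expn_gt0 //.
by rewrite iterD Ht iter_act_period.
Qed.

Lemma retract_id w : all cyc_letter w -> retract w = w.
Proof. by case: w => //= x w ->. Qed.

Lemma all_cyc_retract w : all cyc_letter (retract w).
Proof. by elim: w => //= x w IH; case: ifP => //= _; rewrite IH cyc0. Qed.

Lemma retract_cons0 w : retract (ord0 :: w) = ord0 :: retract w.
Proof. by rewrite /=; case: ifP => // /retract_id->. Qed.

Lemma size_retract w : size (retract w) = size w.
Proof. by elim: w => //= x w IH; case: ifP => //= _; rewrite IH. Qed.

Lemma retract_act c w : c != ord0 ->
  retract (act c w) = if (c == a) && all cyc_letter w then act a w else retract w.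
Proof.
move=> c0; elim: w => [|x w IH]; first by case: ifP.
have cyc_c : c != a -> cyc_letter c = false.
  by move=> ca; rewrite /cyc_letter (negbTE c0) (negbTE ca).
case: (x =P ord0) => [->|/eqP x0].
  rewrite act_cons0 retract_cons0 /=; move: IH; case: (c =P a) => [->|/eqP ca] IH /=.
    by rewrite cyca all_cyc_act /=; case: ifP => cw //; rewrite IH ?eqxx cw.
  by rewrite cyc_c // IH.
case: (x =P c) => [->|/eqP xc].
  rewrite act_cons_self // retract_cons0; case: (c =P a) => [->|/eqP ca].
    rewrite act_cons_self // /= cyca /=.
    by case: ifP => cw; [rewrite retract_id | rewrite cw].
  by rewrite /= cyc_c.
rewrite act_cons_fix //; case: (c =P a) => [ca|] //=; case: ifP => // xw.
by rewrite (negbTE x0) -ca (negbTE xc).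
Qed.

Lemma cyc_word_decomp w : all cyc_letter w ->
  exists k s, w = nseq k ord0 ++ s /\ stable_suffix s.
Proof.
elim: w => [|x w IH]; first by exists 0, [::]; rewrite /stable_suffix /= eqxx.
case/andP=> /orP[/eqP->|/eqP->] cw.
  by have [k [s [-> ss]]] := IH cw; exists k.+1, s.
by exists 0, (a :: w); rewrite /stable_suffix /= cyca eqxx andbT.
Qed.

End Words.

Lemma iter_mod_order (T : finType) (f : T -> T) x m : injective f ->
  iter (m %% order f x) f x = iter m f x.
Proof.
move=> inj_f; rewrite {2}(divn_eq m (order f x)) addnC iterD iterM.
by rewrite (iter_fix (m %/ _)) ?iter_order.
Qed.

Lemma find_iota0 (P : pred nat) m d : d < m -> P d ->
  (forall k, k < d -> ~~ P k) -> find P (iota 0 m) = d.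
Proof.
move=> ltdm Pd notP.
have hasP : has P (iota 0 m) by apply/hasP; exists d; rewrite ?mem_iota.
have ltfm : find P (iota 0 m) < m by rewrite -[m in _ < m](size_iota 0) -has_find.
case: (ltngtP (find P (iota 0 m)) d) => // [/notP/negP[] | ltdf].
  by have := nth_find 0 hasP; rewrite nth_iota.
by have := before_find 0 ltdf; rewrite nth_iota ?Pd // (ltn_trans ltdf).
Qed.

Lemma iter_inj (T : Type) (f : T -> T) m : injective f -> injective (iter m f).
Proof. by move=> inj_f; elim: m => //= m IH x y /inj_f /IH. Qed.

Lemma gen_neq0 p (j : 'I_p) : gen j != ord0.
Proof. by rewrite /gen eq_sym neq_lift. Qed.

Lemma gen_eq p (j l : 'I_p) : (gen j == gen l) = (j == l).
Proof. exact/inj_eq/lift_inj. Qed.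

(** * The cycle C_n^i and the distance to 0^n *)

Section Schreier.

Variables (p n : nat) (i : 'I_p).
Local Notation V := (vert p n).
Local Notation a := (gen i).
Local Notation e := (@eact p n i).
Local Notation o := (zero p n).
Implicit Types (v w x y : V) (j : 'I_p).

Lemma eact_inj j : injective (@eact p n j).
Proof. by move=> x y /(congr1 val) /(act_inj (gen_neq0 j)) /val_inj. Qed.

Lemma val_iter_eact j t x : val (iter t (eact j) x) = iter t (act (gen j)) x.
Proof. by elim: t => //= t ->. Qed.

Lemma inCE v : inC i v = all (cyc_letter a) v.
Proof.
apply/idP/idP => [/iter_findex <-|cv].
  rewrite val_iter_eact; elim: (findex _ _ _) => /= [|t IH].
    by rewrite all_nseq cyc0 orbT.
  by rewrite all_cyc_act.
have [t Ht] := act_reach (gen_neq0 i) cv.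
have -> : v = iter t e o by apply: val_inj; rewrite val_iter_eact /= -Ht size_tuple.
exact: fconnect_iter.
Qed.

Lemma isCedgeE x j : isCedge i (x, j) = (j == i) && all (cyc_letter a) x.
Proof. by rewrite /isCedge inCE. Qed.

Lemma isCedge_eact j x : isCedge i (eact j x, j) = isCedge i (x, j).
Proof. by rewrite !isCedgeE; case: eqP => //= ->; rewrite all_cyc_act. Qed.

Lemma isCedge_iter j t x : isCedge i (iter t (eact j) x, j) = isCedge i (x, j).
Proof. by elim: t => //= t <-; rewrite isCedge_eact. Qed.

Definition cyc_order := order e o.
Definition cyc_pos v := findex e o v.
Definition cyc_dist v := minn (cyc_pos v) (cyc_order - cyc_pos v).

Lemma cyc_pos_lt v : inC i v -> cyc_pos v < cyc_order.
Proof. exact: findex_max. Qed.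

Lemma cyc_pos_iter m : cyc_pos (iter m e o) = m %% cyc_order.
Proof.
rewrite -iter_mod_order ?[cyc_pos _]findex_iter ?ltn_pmod ?order_gt0 //.
exact: eact_inj.
Qed.

Lemma cyc_pos_inj v w : inC i v -> inC i w -> cyc_pos v = cyc_pos w -> v = w.
Proof.
by move=> cv cw eq_pos; rewrite -(iter_findex cv) -(iter_findex cw); congr iter.
Qed.

Lemma cyc_pos_eact v : inC i v -> cyc_pos (e v) = (cyc_pos v).+1 %% cyc_order.
Proof. by move=> cv; rewrite -{1}(iter_findex cv) -iterS cyc_pos_iter. Qed.

Lemma cyc_dist_eact v : inC i v ->
  cyc_dist (e v) <= (cyc_dist v).+1 /\ cyc_dist v <= (cyc_dist (e v)).+1.
Proof.
move=> cv; rewrite /cyc_dist cyc_pos_eact //; have := cyc_pos_lt cv.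
case: (ltngtP (cyc_pos v).+1 cyc_order) => [lt _ | // | eqN _].
  by rewrite modn_small //; lia.
by rewrite -eqN modnn; lia.
Qed.

Lemma zero_inC : inC i o.
Proof. exact: connect0. Qed.

Lemma cyc_dist_zero : cyc_dist o = 0.
Proof. by rewrite /cyc_dist /cyc_pos findex0 min0n. Qed.

Lemma size_cyc_retract v : size (retract a v) == n.
Proof. by rewrite size_retract size_tuple. Qed.

Definition cyc_retract v : V := Tuple (size_cyc_retract v).

Lemma inC_cyc_retract v : inC i (cyc_retract v).
Proof. by rewrite inCE all_cyc_retract. Qed.

Lemma cyc_retract_id v : inC i v -> cyc_retract v = v.
Proof. by rewrite inCE => cv; apply: val_inj; rewrite /= retract_id. Qed.

Lemma cyc_retract_eact j v : cyc_retract (eact j v) = cyc_retract v \/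
  cyc_retract (eact j v) = e (cyc_retract v).
Proof.
have := retract_act (gen_neq0 i) (val v) (gen_neq0 j); rewrite gen_eq.
case: ifP => [/andP[/eqP-> cv] | _] E; [right | left]; apply: val_inj => //=.
by rewrite E retract_id.
Qed.

Lemma cyc_dist_adj x y :
  adj x y -> cyc_dist (cyc_retract y) <= (cyc_dist (cyc_retract x)).+1.
Proof.
case/existsP=> j /orP[] /eqP <-.
  case: (cyc_retract_eact j x) => ->; first exact: leqnSn.
  exact: (cyc_dist_eact (inC_cyc_retract x)).1.
case: (cyc_retract_eact j y) => ->; first exact: leqnSn.
exact: (cyc_dist_eact (inC_cyc_retract y)).2.
Qed.

Lemma cyc_dist_path x s : path (@adj p n) x s ->
  cyc_dist (cyc_retract (last x s)) <= cyc_dist (cyc_retract x) + size s.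
Proof.
elim: s x => [|y s IH] x /=; first by rewrite addn0.
by case/andP=> /cyc_dist_adj xy /IH; lia.
Qed.

Definition walk x y k := [exists s : k.-tuple V, path (@adj p n) x s && (last x s == y)].

Lemma walk_iter (f : V -> V) x k : (forall y, adj y (f y)) -> walk x (iter k f x) k.
Proof.
move=> adj_f; apply/existsP; exists (Tuple (introT eqP (size_traject f (f x) k))).
rewrite /= last_traject eqxx andbT.
by apply: sub_path (fpath_traject f x k) => y z /eqP <-.
Qed.

Lemma walk_cyc_dist v : inC i v -> walk o v (cyc_dist v).
Proof.
move=> cv; rewrite /cyc_dist; case: leqP => _.
  rewrite -{1}(iter_findex cv); apply: walk_iter => y.
  by apply/existsP; exists i; rewrite eqxx.
have {1}-> : v = iter (cyc_order - cyc_pos v) (finv e) o.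
  rewrite iter_finv ?leq_subr ?subKn ?iter_findex ?(ltnW (cyc_pos_lt cv)) //.
  exact: eact_inj.
apply: walk_iter => y; apply/existsP; exists i.
by rewrite f_finv ?eqxx ?orbT //; exact: eact_inj.
Qed.

Lemma cyc_dist_walk v k : inC i v -> walk o v k -> cyc_dist v <= k.
Proof.
move=> cv /existsP[s /andP[/cyc_dist_path + /eqP last_s]].
by rewrite last_s size_tuple !cyc_retract_id ?zero_inC // cyc_dist_zero.
Qed.

Lemma dist_zero v : inC i v -> dist o v = cyc_dist v.
Proof.
move=> cv; apply: find_iota0 => [|| k lt_k].
- exact: leq_ltn_trans (geq_minl _ _) (leq_trans (cyc_pos_lt cv) (max_card _)).
- exact: walk_cyc_dist.
- by apply/negP => /(cyc_dist_walk cv); rewrite leqNgt lt_k.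
Qed.

Definition refl v : V := map_tuple (swap a) (e v).

Lemma refl_eact v : inC i v -> e (refl (e v)) = refl v.
Proof.
by rewrite inCE => cv; apply: val_inj; rewrite /= act_swap_act ?gen_neq0 ?all_cyc_act.
Qed.

Lemma refl_zero : refl o = o.
Proof.
apply: val_inj; rewrite /= -[nseq n _]cats0 act_nseq_cat map_cat map_nseq.
by rewrite swapa ?gen_neq0.
Qed.

Lemma iter_refl m v : inC i v -> iter m e (refl (iter m e v)) = refl v.
Proof.
move=> cv; elim: m => // m IH; rewrite iterSr iterS refl_eact ?IH //.
exact: connect_trans cv (fconnect_iter _ _ _).
Qed.

Lemma phi_refl v : inC i v -> phi i v = refl v.
Proof.
move=> cv; apply: (@iter_inj _ _ (cyc_pos v) (@eact_inj i)).
have -> : phi i v = iter (cyc_order - cyc_pos v) e o.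
  by rewrite /phi iter_mod_order //; exact: eact_inj.
rewrite -iterD subnKC ?(ltnW (cyc_pos_lt cv)) // iter_order; last exact: eact_inj.
by rewrite -{2}(iter_findex cv) iter_refl ?zero_inC // refl_zero.
Qed.

Lemma inC_phi v : inC i (phi i v).
Proof. exact: fconnect_iter. Qed.

Lemma cyc_pos_phi v : inC i v ->
  cyc_pos (phi i v) = if cyc_pos v == 0 then 0 else cyc_order - cyc_pos v.
Proof.
move=> cv; rewrite [phi i v]/phi cyc_pos_iter modn_mod -/cyc_order -/(cyc_pos v).
case: eqP => [->|nz]; first by rewrite subn0 modnn.
by have := cyc_pos_lt cv => lt; rewrite modn_small //; lia.
Qed.

Lemma cyc_dist_eq v w : inC i v -> inC i w ->
  cyc_dist w = cyc_dist v <-> w = v \/ w = phi i v.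
Proof.
move=> cv cw; have lt_v := cyc_pos_lt cv; have lt_w := cyc_pos_lt cw.
have pos_phi := cyc_pos_phi cv; rewrite /cyc_dist.
split => [eq_d | [->|->] //]; last by rewrite pos_phi; case: eqP; lia.
have : cyc_pos w = cyc_pos v \/ cyc_pos w = cyc_pos (phi i v).
  by rewrite pos_phi; case: eqP; lia.
by case=> [/(cyc_pos_inj cw cv) | /(cyc_pos_inj cw (inC_phi v))]; [left | right].
Qed.

End Schreier.

(** * Decorations *)

Section Decorations.

Variables (p n : nat) (i : 'I_p) (k : nat).
Hypothesis k_le_n : k <= n.
Local Notation V := (vert p n).
Local Notation a := (gen i).
Local Notation stable x := (stable_suffix a (drop k x)).
Implicit Types (v w x y : V) (j : 'I_p).

Lemma decV_eact v x j :
  x \in decV i v -> ~~ isCedge i (x, j) -> eact j x \in decV i v.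
Proof.
rewrite !inE => vx nC; apply: connect_trans vx (connect1 _).
by apply/existsP; exists j; rewrite nC eqxx.
Qed.

Lemma adjD_sym : symmetric (@adjD p n i).
Proof. by move=> x y; apply/existsP/existsP => -[j]; exists j; rewrite orbC. Qed.

Lemma size_graft w x : size (take k x ++ drop k w) == n.
Proof. by rewrite size_cat size_take_min size_drop !size_tuple; apply/eqP; lia. Qed.

Definition graft w x : V := Tuple (size_graft w x).

Lemma take_graft w x : take k (graft w x) = take k x.
Proof. by rewrite take_size_cat // size_takel ?size_tuple. Qed.

Lemma drop_graft w x : drop k (graft w x) = drop k w.
Proof. by rewrite drop_size_cat // size_takel ?size_tuple. Qed.

Lemma take_drop_inj x y : take k x = take k y -> drop k x = drop k y -> x = y.
Proof.
by move=> tx dx; apply: val_inj; rewrite /= -(cat_take_drop k x) tx dx cat_take_drop.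
Qed.

Lemma graftK v w x : drop k x = drop k v -> graft v (graft w x) = x.
Proof. by move=> dx; apply: take_drop_inj; rewrite ?take_graft ?drop_graft. Qed.

Lemma isCedge_stable x j : stable x ->
  isCedge i (x, j) = (j == i) && all (cyc_letter a) (take k x).
Proof.
by case/andP=> cs _; rewrite isCedgeE -{1}(cat_take_drop k x) all_cat cs andbT.
Qed.

Lemma drop_eact x j : stable x -> ~~ isCedge i (x, j) -> drop k (eact j x) = drop k x.
Proof.
move=> sx; rewrite isCedge_stable // -gen_eq => nC.
exact: (drop_act (gen_neq0 i) sx nC).
Qed.

Lemma isCedge_graft w x j : stable x -> stable w ->
  isCedge i (graft w x, j) = isCedge i (x, j).
Proof. by move=> sx sw; rewrite !isCedge_stable ?drop_graft ?take_graft. Qed.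

Lemma graft_eact w x j : stable x -> stable w -> ~~ isCedge i (x, j) ->
  graft w (eact j x) = eact j (graft w x).
Proof.
move=> sx sw nC; apply: take_drop_inj.
  by rewrite take_graft /= !take_act take_graft.
by rewrite drop_graft drop_eact ?drop_graft ?isCedge_graft.
Qed.

Lemma drop_iter_eact x j t : stable x -> ~~ isCedge i (x, j) ->
  drop k (iter t (eact j) x) = drop k x.
Proof.
move=> sx nC; elim: t => //= t IH.
by rewrite drop_eact ?IH ?isCedge_iter.
Qed.

Lemma adjD_drop x y : stable x -> adjD i x y -> drop k y = drop k x.
Proof.
move=> sx /existsP[j /orP[] /andP[nC /eqP E]]; subst; first exact: drop_eact.
rewrite -{1}(finv_f (@eact_inj p n j) y) /finv drop_iter_eact // isCedge_eact //.
Qed.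

Lemma drop_decV v x : stable v -> x \in decV i v -> drop k x = drop k v.
Proof.
move=> sv; have sym := sym_connect_sym adjD_sym.
have cl : closed (@adjD p n i) [pred y : V | drop k y == drop k v].
  apply: intro_closed => // y z yz /eqP dy.
  by rewrite inE (adjD_drop _ yz) ?dy.
by rewrite inE => /(closed_connect cl); rewrite !inE eqxx => /esym/eqP.
Qed.

Lemma adjD_graft w x y : stable x -> stable w -> adjD i x y ->
  adjD i (graft w x) (graft w y).
Proof.
move=> sx sw xy; have sy : stable y by rewrite (adjD_drop sx xy).
case/existsP: xy => j /orP[] /andP[nC /eqP E]; subst; apply/existsP; exists j.
  by rewrite isCedge_graft // nC graft_eact // eqxx.
by rewrite [isCedge _ (graft w y, j)]isCedge_graft // nC graft_eact // eqxx orbT.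
Qed.

Lemma graft_decV v w x : stable v -> stable w ->
  x \in decV i v -> graft w x \in decV i (graft w v).
Proof.
move=> sv sw; rewrite !inE => /connectP[q].
elim: q v sv => [|y q IH] u su /= => [_ -> | /andP[uy yq] lst]; first exact: connect0.
apply: connect_trans (connect1 (adjD_graft su sw uy)) (IH y _ yq lst).
by rewrite (adjD_drop su uy).
Qed.

Lemma in_decE v (ed : edge p n) :
  (ed \in decE i v) = ~~ isCedge i ed && (src ed \in decV i v).
Proof. by rewrite inE. Qed.

Section Iso.

Variables v w : V.
Hypotheses (sv : stable v) (sw : stable w) (take_vw : take k v = take k w).

Lemma graft_vw : graft w v = w.
Proof. by apply: take_drop_inj; rewrite ?take_graft ?drop_graft. Qed.

Lemma graft_wv : graft v w = v.
Proof. by apply: take_drop_inj; rewrite ?take_graft ?drop_graft. Qed.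

Lemma graft_decV_vw x : x \in decV i v -> graft w x \in decV i w.
Proof. by rewrite -{2}graft_vw; exact: graft_decV. Qed.

Lemma graft_inj_decV : {in decV i v &, injective (graft w)}.
Proof.
move=> x y /(drop_decV sv) dx /(drop_decV sv) dy /(congr1 (graft v)).
by rewrite !graftK.
Qed.

Lemma graft_decV_img : graft w @: decV i v = decV i w.
Proof.
apply/setP => y; apply/imsetP/idP => [[x vx ->] | wy]; first exact: graft_decV_vw.
exists (graft v y); first by rewrite -{2}graft_wv; exact: graft_decV.
by rewrite graftK // (drop_decV sw wy).
Qed.

Lemma mult_graft : {in decV i v &, forall x y,
  mult (decE i v) x y = mult (decE i w) (graft w x) (graft w y)}.
Proof.
move=> x y vx vy; rewrite /mult.
set A := [set _ in decE i v | _]; set B := [set _ in decE i w | _].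
pose h (ed : edge p n) := (graft w ed.1, ed.2).
have eq_graft u u' : u \in decV i v -> u' \in decV i v ->
    (graft w u == graft w u') = (u == u').
  by move=> vu vu'; apply/eqP/eqP => [/graft_inj_decV -> | ->].
have hB u j : u \in decV i v -> (h (u, j) \in B) = ((u, j) \in A).
  move=> vu; have su : stable u by rewrite (drop_decV sv vu).
  rewrite [_ \in B]inE [_ \in A]inE !in_decE /src /tgt /= isCedge_graft //.
  rewrite graft_decV_vw // vu.
  case nC: (isCedge i (u, j)) => //=.
  have vu' := decV_eact vu (negbT nC).
  by rewrite -graft_eact ?nC // !eq_graft.
have srcA u j : (u, j) \in A -> u \in decV i v.
  by rewrite inE in_decE => /andP[/andP[_ ->]].
have -> : B = h @: A.
  apply/setP => -[u' j]; apply/idP/imsetP => [Bu' | ].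
    have : u' \in decV i w by move: Bu'; rewrite inE in_decE => /andP[/andP[_]].
    rewrite -graft_decV_img => /imsetP[u vu Eu]; exists (u, j); last by rewrite Eu.
    by rewrite -hB // /h /= -Eu.
  by case=> -[u j'] /[dup] Au /srcA vu [-> ->]; rewrite hB.
rewrite card_in_imset // => -[u j] [u' j'] /srcA vu /srcA vu' /pair_equal_spec[/= E ->].
by rewrite (graft_inj_decV vu vu' E).
Qed.

Lemma decoration_iso : graph_iso (decV i v) (decV i w) (decE i v) (decE i w).
Proof.
exists (graft w).
by split; [exact: graft_inj_decV | exact: graft_decV_img | exact: mult_graft].
Qed.

End Iso.

End Decorations.

Unset Implicit Arguments.

Theorem proposition4p9 (p n : nat) (i : 'I_p) (hp : 0 < p) (hn : 0 < n)
    (v : vert p n) (hv : inC i v) :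
  graph_iso (decV i v) (decV i (phi i v)) (decE i v) (decE i (phi i v)) /\
  (forall v' : vert p n, inC i v' ->
     (dist (zero p n) v' = dist (zero p n) v) <-> (v' = v \/ v' = phi i v)).
Proof.
split; last by move=> v' hv'; rewrite (dist_zero hv) (dist_zero hv'); exact: cyc_dist_eq.
have a_neq0 := gen_neq0 i.
have := hv; rewrite inCE => /cyc_word_decomp[k [s [Ev ss]]].
have Ephi : phi i v = nseq k ord0 ++ map (swap (gen i)) (act (gen i) s) :> seq _.
  by rewrite phi_refl //= Ev act_nseq_cat map_cat map_nseq swapa.
have k_le_n : k <= n by rewrite -(size_tuple v) Ev size_cat size_nseq leq_addr.
apply: (decoration_iso k_le_n);
  rewrite ?Ephi ?Ev ?drop_size_cat ?take_size_cat ?size_nseq //.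
exact: stable_swap_act.
Qed.
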